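(* Let $\mathcal C$ be a small one-way category and $c_0\prec c_1$ objects of $\mathcal C$. Given a span of sets $T\xleftarrow{f}S\xrightarrow{g}\mathcal C(c_0,c_1)$, let $\mathcal D$ be the pushout of categories of $\mathbb 2[f]:\mathbb 2[S]\to\mathbb 2[T]$ along the functor $\mathbb 2[S]\to\mathcal C$ sending $0\mapsto c_0$, $1\mapsto c_1$ and acting by $g$ on morphisms. Then $\mathcal D$ has the same objects as $\mathcal C$, and for all objects $a,b$ the hom-set $\mathcal D(a,b)$ is the pushout of sets of $$\mathcal C(c_1,b)\times T\times\mathcal C(a,c_0)\xleftarrow{\ \mathrm{id}\times f\times\mathrm{id}\ }\mathcal C(c_1,b)\times S\times\mathcal C(a,c_0)\xrightarrow{\ (q,s,p)\mapsto q\circ g(s)\circ p\ }\mathcal C(a,b).$$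
   Context: A category $\mathcal C$ is one-way if (i) $\mathcal C(x,x)=\{\mathrm{id}_x\}$ for every object $x$, and (ii) the relation $x\preccurlyeq y$ defined by ''$\mathcal C(x,y)$ is nonempty'' is antisymmetric (hence a partial order); $x\prec y$ means $x\preccurlyeq y$ and $x\ne y$. For a set $S$, $\mathbb 2[S]$ is the category with two objects $0,1$, with $\mathbb 2[S](0,1)=S$, only identity endomorphisms, and no morphisms $1\to0$; a function $f:S\to T$ induces $\mathbb 2[f]$. *)

From Stdlib Require Import JMeq.

Record Category := MkCategory {
  Obj : Type;
  Hom : Obj -> Obj -> Type;
  idm : forall x, Hom x x;
  comp : forall x y z, Hom y z -> Hom x y -> Hom x z;
  comp_id_l : forall x y (h : Hom x y), comp x y y (idm y) h = h;
  comp_id_r : forall x y (h : Hom x y), comp x x y h (idm x) = h;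
  comp_assoc : forall w x y z (h : Hom y z) (k : Hom x y) (l : Hom w x),
      comp w y z h (comp w x y k l) = comp w x z (comp x y z h k) l
}.
Arguments Hom {C} x y : rename.
Arguments idm {C} x : rename.
Arguments comp {C} {x y z} _ _ : rename.

Record Functor (C D : Category) := MkFunctor {
  fobj : Obj C -> Obj D;
  fmor : forall x y, @Hom C x y -> @Hom D (fobj x) (fobj y);
  fmor_id : forall x, fmor x x (idm x) = idm (fobj x);
  fmor_comp : forall x y z (h : @Hom C y z) (k : @Hom C x y),
      fmor x z (comp h k) = comp (fmor y z h) (fmor x y k)
}.
Arguments fobj {C D} _ _.
Arguments fmor {C D} _ {x y} _.

Definition Fcomp {A B C : Category} (G : Functor B C) (F : Functor A B)
  : Functor A C.
Proof.
  refine (MkFunctor A C (fun x => fobj G (fobj F x))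
            (fun x y h => fmor G (fmor F h)) _ _).
  - intros x. rewrite (fmor_id _ _ F), (fmor_id _ _ G). reflexivity.
  - intros x y z h k. rewrite (fmor_comp _ _ F), (fmor_comp _ _ G). reflexivity.
Defined.

Definition feq {C D : Category} (F G : Functor C D) : Prop :=
  (forall x, fobj F x = fobj G x) /\
  (forall x y (h : @Hom C x y), JMeq (fmor F h) (fmor G h)).

Definition one_way (C : Category) : Prop :=
  (forall x (h : @Hom C x x), h = idm x) /\
  (forall x y : Obj C, inhabited (Hom x y) -> inhabited (Hom y x) -> x = y).

Definition cpreceq (C : Category) (x y : Obj C) : Prop := inhabited (@Hom C x y).
Definition cprec (C : Category) (x y : Obj C) : Prop := cpreceq C x y /\ x <> y.

(** The category 2[S]: objects false = 0, true = 1. *)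
Definition Hom2 (S : Type) (x y : bool) : Type :=
  if x then (if y then unit else Empty_set) else (if y then S else unit).

Definition id2 (S : Type) (x : bool) : Hom2 S x x :=
  if x return Hom2 S x x then tt else tt.

Definition comp2 (S : Type) (x y z : bool) : Hom2 S y z -> Hom2 S x y -> Hom2 S x z :=
  match x, y, z return Hom2 S y z -> Hom2 S x y -> Hom2 S x z with
  | false, false, false => fun _ _ => tt
  | false, false, true => fun h _ => h
  | false, true, false => fun _ _ => tt
  | false, true, true => fun _ k => k
  | true, false, _ => fun _ k => Empty_set_rect _ k
  | true, true, false => fun h _ => h
  | true, true, true => fun _ _ => tt
  end.

Definition two (S : Type) : Category.
Proof.
  refine (MkCategory bool (Hom2 S) (id2 S) (comp2 S) _ _ _).
  - intros [|] [|] h; simpl in *; try destruct h; reflexivity.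
  - intros [|] [|] h; simpl in *; try destruct h; reflexivity.
  - intros [|] [|] [|] [|] h k l; simpl in *;
      try destruct h; try destruct k; try destruct l; reflexivity.
Defined.

Definition map2 {S T : Type} (f : S -> T) (x y : bool) : Hom2 S x y -> Hom2 T x y :=
  match x, y return Hom2 S x y -> Hom2 T x y with
  | false, true => f
  | false, false => fun h => h
  | true, false => fun h => h
  | true, true => fun h => h
  end.

Definition two_map {S T : Type} (f : S -> T) : Functor (two S) (two T).
Proof.
  refine (MkFunctor (two S) (two T) (fun b => b) (map2 f) _ _).
  - intros [|]; reflexivity.
  - intros [|] [|] [|] h k; simpl in *;
      try destruct h; try destruct k; reflexivity.
Defined.

Definition Gmor {C : Category} {c0 c1 : Obj C} {S : Type} (g : S -> @Hom C c0 c1)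
  (x y : bool) : Hom2 S x y ->
      @Hom C (if x then c1 else c0) (if y then c1 else c0) :=
  match x, y return Hom2 S x y ->
      @Hom C (if x then c1 else c0) (if y then c1 else c0) with
  | false, false => fun _ => idm c0
  | false, true => g
  | true, false => fun h => Empty_set_rect _ h
  | true, true => fun _ => idm c1
  end.

Definition Gfun {C : Category} {c0 c1 : Obj C} {S : Type} (g : S -> @Hom C c0 c1)
  : Functor (two S) C.
Proof.
  refine (MkFunctor (two S) C (fun b : bool => if b then c1 else c0) (Gmor g) _ _).
  - intros [|]; reflexivity.
  - intros [|] [|] [|] h k; simpl in *;
      try destruct h; try destruct k;
      rewrite ?comp_id_l, ?comp_id_r; reflexivity.
Defined.

Definition is_cat_pushout {A B1 B2 P : Category}
  (F1 : Functor A B1) (F2 : Functor A B2)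
  (i1 : Functor B1 P) (i2 : Functor B2 P) : Prop :=
  feq (Fcomp i1 F1) (Fcomp i2 F2) /\
  forall (E : Category) (k1 : Functor B1 E) (k2 : Functor B2 E),
    feq (Fcomp k1 F1) (Fcomp k2 F2) ->
    exists H : Functor P E,
      feq (Fcomp H i1) k1 /\ feq (Fcomp H i2) k2 /\
      forall H' : Functor P E,
        feq (Fcomp H' i1) k1 -> feq (Fcomp H' i2) k2 -> feq H' H.

Definition is_set_pushout {A B1 B2 P : Type}
  (u1 : A -> B1) (u2 : A -> B2) (v1 : B1 -> P) (v2 : B2 -> P) : Prop :=
  (forall a, v1 (u1 a) = v2 (u2 a)) /\
  forall (X : Type) (w1 : B1 -> X) (w2 : B2 -> X),
    (forall a, w1 (u1 a) = w2 (u2 a)) ->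
    exists h : P -> X,
      (forall b, h (v1 b) = w1 b) /\ (forall b, h (v2 b) = w2 b) /\
      forall h' : P -> X,
        (forall b, h' (v1 b) = w1 b) -> (forall b, h' (v2 b) = w2 b) ->
        forall p, h' p = h p.

Definition bijective {X Y : Type} (h : X -> Y) : Prop :=
  (forall x x', h x = h x' -> x = x') /\ (forall y, exists x, h x = y).

Definition hcast {C : Category} {x x' y y' : Obj C} (ex : x = x') (ey : y = y')
  (h : @Hom C x y) : @Hom C x' y' :=
  match ex in _ = x0 return @Hom C x0 y' with
  | eq_refl => match ey in _ = y0 return @Hom C x y0 with eq_refl => h end
  end.

(** We build an explicit model [E] of this pushout:
    [E] has the objects of [C], and [E(x,y)] is the canonical set pushout of
    [C(c1,y) x T x C(x,c0) <- C(c1,y) x S x C(x,c0) -> C(x,y)], i.e. the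
    quotient of the disjoint union by [(q, f s, p) ~ q o g s o p].
    Composition is well defined because there is no morphism [c1 -> c0], so
    two formal composites through [T] never need to be composed.

    [E] comes with functors [iE : C -> E] and [jE : 2[T] -> E] forming a
    commuting square, and the cocone [(i, j)] of [D] induces [K : E -> D].
    The universal property of [D] gives [H : D -> E] restricting to [iE] and
    [jE]; uniqueness forces [K o H = Id].  Hence [i] is bijective on objects
    (with inverse [H]), and [H] identifies [D(i a, i b)] with [E(a,b)], which
    is a set pushout by construction. *)

From Stdlib Require Import JMeq Relation_Operators ClassicalEpsilon ProofIrrelevance
  FunctionalExtensionality PropExtensionality.

Lemma eq_JMeq {A : Type} (a b : A) : a = b -> JMeq a b.
Proof. intros ->; reflexivity. Qed.

Lemma fmor_JMeq {A B : Category} (F : Functor A B) x y x' y'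
  (h : @Hom A x y) (h' : @Hom A x' y') :
  x = x' -> y = y' -> JMeq h h' -> JMeq (fmor F h) (fmor F h').
Proof. intros <- <- Hh; apply JMeq_eq in Hh; subst; reflexivity. Qed.

Lemma comp_JMeq {A : Category} x y z x' y' z' (h : @Hom A y z) (k : @Hom A x y)
  (h' : @Hom A y' z') (k' : @Hom A x' y') :
  x = x' -> y = y' -> z = z' -> JMeq h h' -> JMeq k k' -> JMeq (comp h k) (comp h' k').
Proof.
  intros <- <- <- Hh Hk; apply JMeq_eq in Hh; apply JMeq_eq in Hk; subst; reflexivity.
Qed.

Lemma idm_JMeq {A : Category} (x x' : Obj A) : x = x' -> JMeq (idm x) (idm x').
Proof. intros <-; reflexivity. Qed.

Lemma hcast_JMeq {A : Category} x y x' y' (ex : x = x') (ey : y = y') (h : @Hom A x y) :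
  JMeq (hcast ex ey h) h.
Proof. destruct ex, ey; reflexivity. Qed.

Lemma hcast_eq {A : Category} x y x' y' (ex : x = x') (ey : y = y')
  (h : @Hom A x y) (h' : @Hom A x' y') : JMeq h h' -> hcast ex ey h = h'.
Proof. intros Hh; apply JMeq_eq; eapply JMeq_trans; [apply hcast_JMeq | exact Hh]. Qed.

Section Closure.
Variables (A B : Type) (ra : A -> A -> Prop) (rb : B -> B -> Prop).

Lemma rst_map (F : A -> B) :
  (forall a a', ra a a' -> clos_refl_sym_trans B rb (F a) (F a')) ->
  forall a a', clos_refl_sym_trans A ra a a' -> clos_refl_sym_trans B rb (F a) (F a').
Proof.
  intros HF a a' Haa'; induction Haa'; eauto using clos_refl_sym_trans.
Qed.

Lemma rst_respect {X : Type} (W : A -> X) :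
  (forall a a', ra a a' -> W a = W a') ->
  forall a a', clos_refl_sym_trans A ra a a' -> W a = W a'.
Proof.
  intros HW a a' Haa'; induction Haa'; [auto | reflexivity | symmetry | etransitivity];
    eauto.
Qed.

End Closure.

Section Quotient.
Variables (A : Type) (rel : A -> A -> Prop).

Definition quot : Type :=
  { P : A -> Prop | exists a, P = clos_refl_sym_trans A rel a }.

Definition cls (a : A) : quot :=
  exist _ (clos_refl_sym_trans A rel a) (ex_intro _ a eq_refl).

Definition rep (q : quot) : A :=
  proj1_sig (constructive_indefinite_description _ (proj2_sig q)).

Lemma cls_rep (q : quot) : cls (rep q) = q.
Proof.
  destruct q as [P HP]; unfold rep, cls; simpl.
  destruct (constructive_indefinite_description _ HP) as [a ->]; simpl.
  apply subset_eq_compat; reflexivity.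
Qed.

Lemma cls_eq (a a' : A) : clos_refl_sym_trans A rel a a' -> cls a = cls a'.
Proof.
  intros Haa'; apply subset_eq_compat.
  extensionality z; apply propositional_extensionality; split; intros Hz.
  - eapply rst_trans; [apply rst_sym, Haa' | exact Hz].
  - eapply rst_trans; [exact Haa' | exact Hz].
Qed.

Lemma rep_cls (a : A) : clos_refl_sym_trans A rel (rep (cls a)) a.
Proof.
  assert (Hcl := f_equal (@proj1_sig _ _) (cls_rep (cls a))); simpl in Hcl.
  apply rst_sym; rewrite <- Hcl; apply rst_refl.
Qed.

Lemma quot_ind (P : quot -> Prop) : (forall a, P (cls a)) -> forall q, P q.
Proof. intros HP q; rewrite <- (cls_rep q); apply HP. Qed.

End Quotient.
Arguments cls {A rel} a.
Arguments rep {A rel} q.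

(** The canonical pushout of a span [B1 <- A -> B2] of sets is the quotient of
    [B1 + B2] by the relation generated by [inl (u1 a) ~ inr (u2 a)]. *)

Section SetPushout.
Variables (A B1 B2 P : Type) (u1 : A -> B1) (u2 : A -> B2).

Inductive glue : B1 + B2 -> B1 + B2 -> Prop :=
  glue_intro (a : A) : glue (inl (u1 a)) (inr (u2 a)).

Definition copair {X : Type} (w1 : B1 -> X) (w2 : B2 -> X) (r : B1 + B2) : X :=
  match r with inl b => w1 b | inr b => w2 b end.

Lemma set_pushout_of_quotient (v1 : B1 -> P) (v2 : B2 -> P)
  (theta : P -> quot (B1 + B2) glue) :
  (forall a, v1 (u1 a) = v2 (u2 a)) ->
  (forall r, theta (copair v1 v2 r) = cls r) ->
  (forall p, exists r, copair v1 v2 r = p) ->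
  is_set_pushout u1 u2 v1 v2.
Proof.
  intros Hcom Htheta Hcover; split; [exact Hcom |].
  intros X w1 w2 Hw.
  assert (Hfac : forall r, copair w1 w2 (rep (theta (copair v1 v2 r))) = copair w1 w2 r).
  { intros r; rewrite Htheta.
    apply (rst_respect _ glue (copair w1 w2)); [intros _ _ []; apply Hw | apply rep_cls]. }
  exists (fun p => copair w1 w2 (rep (theta p))); split; [|split].
  - intros b; exact (Hfac (inl b)).
  - intros b; exact (Hfac (inr b)).
  - intros h' Hh1 Hh2 p; destruct (Hcover p) as [r <-].
    rewrite Hfac; destruct r; simpl; auto.
Qed.

End SetPushout.
Arguments glue {A B1 B2} u1 u2 _ _.
Arguments copair {B1 B2 X} w1 w2 r.

Definition IdF (A : Category) : Functor A A :=
  MkFunctor A A (fun x => x) (fun x y h => h) (fun x => eq_refl) (fun x y z h k => eq_refl).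

Lemma feq_sym {A B : Category} (F G : Functor A B) : feq F G -> feq G F.
Proof. intros [Ho Hm]; split; intros; [symmetry | apply JMeq_sym]; auto. Qed.

Lemma feq_trans {A B : Category} (F G K : Functor A B) : feq F G -> feq G K -> feq F K.
Proof.
  intros [Ho Hm] [Ho' Hm']; split; intros.
  - rewrite Ho; auto.
  - eapply JMeq_trans; eauto.
Qed.

Lemma feq_comp_l {A B E : Category} (K : Functor B E) (F G : Functor A B) :
  feq F G -> feq (Fcomp K F) (Fcomp K G).
Proof. intros [Ho Hm]; split; intros; simpl; [rewrite Ho | apply fmor_JMeq]; auto. Qed.

(** We state it
    for a composite [K o H], the form in which it is used. *)

Lemma pushout_retraction {A B1 B2 P E : Category}
  (F1 : Functor A B1) (F2 : Functor A B2) (i1 : Functor B1 P) (i2 : Functor B2 P) :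
  is_cat_pushout F1 F2 i1 i2 ->
  forall (H : Functor P E) (K : Functor E P),
  feq (Fcomp K (Fcomp H i1)) i1 -> feq (Fcomp K (Fcomp H i2)) i2 ->
  feq (Fcomp K H) (IdF P).
Proof.
  intros [Hcom Huniv] H K [Ho1 Hm1] [Ho2 Hm2].
  destruct (Huniv P i1 i2 Hcom) as [U [_ [_ HU]]].
  apply feq_trans with U.
  - apply HU; split; [exact Ho1 | exact Hm1 | exact Ho2 | exact Hm2].
  - apply feq_sym, HU; split; intros; reflexivity.
Qed.

Lemma no_back_of_one_way (C : Category) (c0 c1 : Obj C) :
  one_way C -> cprec C c0 c1 -> @Hom C c1 c0 -> False.
Proof.
  intros [_ Hanti] [[h01] Hne] h10; apply Hne, Hanti; constructor; assumption.
Qed.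

(** A word [x -> y] is either a morphism of
    [C] or a formal composite [q o t o p] with [q : c1 -> y], [t : T] and
    [p : x -> c0]; [E(x,y)] is the canonical set pushout of the span
    [C(c1,y) x T x C(x,c0) <- C(c1,y) x S x C(x,c0) -> C(x,y)]. *)

Section Model.
Variables (C : Category) (c0 c1 : Obj C) (S T : Type).
Variables (f : S -> T) (g : S -> @Hom C c0 c1).
Hypothesis no_back : @Hom C c1 c0 -> False.

Definition spanT (x y : Obj C) :
  @Hom C c1 y * S * @Hom C x c0 -> @Hom C c1 y * T * @Hom C x c0 :=
  fun w => let '(q, s, p) := w in (q, f s, p).

Definition spanC (x y : Obj C) : @Hom C c1 y * S * @Hom C x c0 -> @Hom C x y :=
  fun w => let '(q, s, p) := w in comp q (comp (g s) p).

Definition Word (x y : Obj C) : Type :=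
  (@Hom C c1 y * T * @Hom C x c0 + @Hom C x y)%type.

Definition weq (x y : Obj C) : Word x y -> Word x y -> Prop :=
  clos_refl_sym_trans (Word x y) (glue (spanT x y) (spanC x y)).

Definition EHom (x y : Obj C) : Type := quot (Word x y) (glue (spanT x y) (spanC x y)).

Lemma weq_gen x y q s p :
  weq x y (inl (q, f s, p)) (inr (comp q (comp (g s) p))).
Proof. apply rst_step, (glue_intro _ _ _ (spanT x y) (spanC x y) (q, s, p)). Qed.

(** Concatenation of words; two formal composites never meet, since their
    junction would be a morphism [c1 -> c0]. *)

Definition wcomp {x y z} (a : Word y z) (b : Word x y) : Word x z :=
  match a, b with
  | inr h, inr k => inr (comp h k)
  | inr h, inl (q, t, p) => inl (comp h q, t, p)
  | inl (q, t, p), inr k => inl (q, t, comp p k)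
  | inl (_, _, p), inl (q', _, _) => False_rect _ (no_back (comp p q'))
  end.

Lemma wcomp_resp_l x y z (a a' : Word y z) (b : Word x y) :
  weq y z a a' -> weq x z (wcomp a b) (wcomp a' b).
Proof.
  apply (rst_map _ _ _ _ (fun a => wcomp a b)).
  intros _ _ [[[q s] p]]; destruct b as [[[q' t'] p'] | k]; simpl.
  - destruct (no_back (comp p q')).
  - rewrite <- !comp_assoc; apply weq_gen.
Qed.

Lemma wcomp_resp_r x y z (a : Word y z) (b b' : Word x y) :
  weq x y b b' -> weq x z (wcomp a b) (wcomp a b').
Proof.
  apply (rst_map _ _ _ _ (fun b => wcomp a b)).
  intros _ _ [[[q s] p]]; destruct a as [[[q' t'] p'] | h]; simpl.
  - destruct (no_back (comp p' q)).
  - rewrite (comp_assoc _ _ _ _ _ h q); apply weq_gen.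
Qed.

Definition ecomp {x y z} (a : EHom y z) (b : EHom x y) : EHom x z :=
  cls (wcomp (rep a) (rep b)).

Lemma ecomp_cls x y z (a : Word y z) (b : Word x y) :
  ecomp (cls a) (cls b) = cls (wcomp a b).
Proof.
  apply cls_eq; eapply rst_trans.
  - apply wcomp_resp_l, rep_cls.
  - apply wcomp_resp_r, rep_cls.
Qed.

Definition eid (x : Obj C) : EHom x x := cls (inr (idm x)).

Lemma ecomp_id_l x y (h : EHom x y) : ecomp (eid y) h = h.
Proof.
  revert h; apply quot_ind; intros [[[q t] p] | h];
    unfold eid; rewrite ecomp_cls; simpl; rewrite comp_id_l; reflexivity.
Qed.

Lemma ecomp_id_r x y (h : EHom x y) : ecomp h (eid x) = h.
Proof.
  revert h; apply quot_ind; intros [[[q t] p] | h];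
    unfold eid; rewrite ecomp_cls; simpl; rewrite comp_id_r; reflexivity.
Qed.

Lemma ecomp_assoc w x y z (h : EHom y z) (k : EHom x y) (l : EHom w x) :
  ecomp h (ecomp k l) = ecomp (ecomp h k) l.
Proof.
  revert h; apply quot_ind; intros a; revert k; apply quot_ind; intros b;
    revert l; apply quot_ind; intros c; rewrite !ecomp_cls; f_equal.
  destruct a as [[[q t] p] | h], b as [[[q' t'] p'] | k], c as [[[q'' t''] p''] | l];
    simpl; rewrite ?comp_assoc; try reflexivity; exfalso; apply no_back;
    first [exact (comp p q') | exact (comp p' q'') | exact (comp (comp p k) q'')].
Qed.

Definition Ecat : Category :=
  MkCategory (Obj C) EHom eid (@ecomp) ecomp_id_l ecomp_id_r ecomp_assoc.

Definition iE : Functor C Ecat.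
Proof.
  refine (MkFunctor C Ecat (fun x => x) (fun x y h => cls (inr h)) _ _).
  - intros; reflexivity.
  - intros; simpl; rewrite ecomp_cls; reflexivity.
Defined.

Definition jE_mor (x y : bool) :
  Hom2 T x y -> EHom (if x then c1 else c0) (if y then c1 else c0) :=
  match x, y return Hom2 T x y -> EHom (if x then c1 else c0) (if y then c1 else c0) with
  | false, false => fun _ => eid c0
  | false, true => fun t => cls (inl (idm c1, t, idm c0))
  | true, false => fun h => Empty_set_rect _ h
  | true, true => fun _ => eid c1
  end.

Definition jE : Functor (two T) Ecat.
Proof.
  refine (MkFunctor (two T) Ecat (fun b : bool => if b then c1 else c0) jE_mor _ _).
  - intros [|]; reflexivity.
  - intros [|] [|] [|] h k; simpl in *; try destruct h; try destruct k;
      unfold eid; rewrite ecomp_cls; simpl; rewrite ?comp_id_l, ?comp_id_r; reflexivity.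
Defined.

Lemma E_square : feq (Fcomp jE (two_map f)) (Fcomp iE (Gfun g)).
Proof.
  split.
  - intros [|]; reflexivity.
  - intros [|] [|] h; simpl in *; try destruct h; try reflexivity.
    assert (Hgen := weq_gen c0 c1 (idm c1) h (idm c0)).
    rewrite comp_id_r, comp_id_l in Hgen; apply eq_JMeq, cls_eq, Hgen.
Qed.

Lemma cls_zigzag x y (q : @Hom C c1 y) (t : T) (p : @Hom C x c0) :
  @cls (Word x y) _ (inl (q, t, p)) =
  @comp Ecat _ _ _ (fmor iE q) (@comp Ecat _ _ _ (@fmor _ _ jE false true t) (fmor iE p)).
Proof. simpl; rewrite !ecomp_cls; simpl; rewrite comp_id_l, comp_id_r; reflexivity. Qed.

Section Comparison.
Variables (D : Category) (j : Functor (two T) D) (i : Functor C D).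
Variables (e0 : fobj j false = fobj i c0) (e1 : fobj j true = fobj i c1).
Hypothesis j_g : forall s, hcast e0 e1 (@fmor _ _ j false true (f s)) = fmor i (g s).

Definition realizeT (x y : Obj C) :
  @Hom C c1 y * T * @Hom C x c0 -> @Hom D (fobj i x) (fobj i y) :=
  fun w => let '(q, t, p) := w in
    comp (fmor i q) (comp (hcast e0 e1 (@fmor _ _ j false true t)) (fmor i p)).

Definition realize {x y} : Word x y -> @Hom D (fobj i x) (fobj i y) :=
  copair (realizeT x y) (fun h => fmor i h).

Lemma realize_square x y (w : @Hom C c1 y * S * @Hom C x c0) :
  realizeT x y (spanT x y w) = fmor i (spanC x y w).
Proof. destruct w as [[q s] p]; simpl; rewrite !fmor_comp, j_g; reflexivity. Qed.

Lemma realize_rep_cls x y (w : Word x y) : realize (rep (cls w : EHom x y)) = realize w.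
Proof.
  apply (rst_respect _ (glue (spanT x y) (spanC x y)) realize); [| apply rep_cls].
  intros _ _ [w']; apply realize_square.
Qed.

Definition Kfun : Functor Ecat D.
Proof.
  refine (MkFunctor Ecat D (fobj i) (fun x y m => realize (rep m)) _ _).
  - intros x; simpl; unfold eid; rewrite realize_rep_cls; apply fmor_id.
  - intros x y z h k; simpl; revert h; apply quot_ind; intros a;
      revert k; apply quot_ind; intros b.
    rewrite ecomp_cls, !realize_rep_cls.
    destruct a as [[[q t] p] | h], b as [[[q' t'] p'] | k]; simpl.
    + destruct (no_back (comp p q')).
    + rewrite fmor_comp, !comp_assoc; reflexivity.
    + rewrite fmor_comp, !comp_assoc; reflexivity.
    + apply fmor_comp.
Defined.

Lemma K_iE : feq (Fcomp Kfun iE) i.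
Proof. split; intros; simpl; [reflexivity | rewrite realize_rep_cls; reflexivity]. Qed.

Lemma K_jE : feq (Fcomp Kfun jE) j.
Proof.
  split.
  - intros [|]; symmetry; assumption.
  - intros [|] [|] h; simpl in h; try destruct h; simpl;
      unfold eid; rewrite realize_rep_cls; simpl; rewrite ?fmor_id.
    + apply idm_JMeq; symmetry; assumption.
    + rewrite comp_id_l, comp_id_r; apply hcast_JMeq.
    + apply idm_JMeq; symmetry; assumption.
Qed.

Section Inverse.
Variable H : Functor D Ecat.
Hypothesis H_i : feq (Fcomp H i) iE.
Hypothesis H_j : feq (Fcomp H j) jE.

Lemma H_realize x y (w : Word x y) : JMeq (fmor H (realize w)) (cls w : EHom x y).
Proof.
  destruct H_i as [Hio Him], H_j as [_ Hjm].
  destruct w as [[[q t] p] | h]; simpl; [| apply Him].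
  rewrite cls_zigzag, !fmor_comp.
  apply (comp_JMeq (A := Ecat)); [apply Hio | apply Hio | apply Hio | apply Him |].
  apply (comp_JMeq (A := Ecat)); [apply Hio | apply Hio | apply Hio | | apply Him].
  eapply JMeq_trans; [| apply (Hjm false true t)].
  apply (fmor_JMeq H); [symmetry; exact e0 | symmetry; exact e1 | apply hcast_JMeq].
Qed.

Hypothesis KH : feq (Fcomp Kfun H) (IdF D).

Lemma i_bijective : bijective (fobj i).
Proof.
  destruct H_i as [Hio _]; split.
  - intros x y Hxy; transitivity (fobj H (fobj i x)); [symmetry; apply Hio |].
    rewrite Hxy; apply Hio.
  - intros d; exists (fobj H d); exact (proj1 KH d).
Qed.

Lemma hom_set_pushout (a b : Obj C) :
  is_set_pushout (spanT a b) (spanC a b) (realizeT a b) (fun h => fmor i h).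
Proof.
  destruct H_i as [Hio _].
  set (theta := fun d : @Hom D (fobj i a) (fobj i b) =>
                  hcast (C := Ecat) (Hio a) (Hio b) (fmor H d)).
  apply (set_pushout_of_quotient _ _ _ _ _ _ _ _ theta).
  - apply realize_square.
  - intros w; apply (hcast_eq (A := Ecat)), H_realize.
  - intros d; exists (rep (theta d)).
    apply JMeq_eq; change (JMeq (fmor Kfun (theta d)) d).
    eapply JMeq_trans; [| exact (proj2 KH _ _ d)].
    apply (fmor_JMeq Kfun); [symmetry; apply Hio | symmetry; apply Hio | apply hcast_JMeq].
Qed.

End Inverse.
End Comparison.
End Model.

Lemma square_on_generators (C D : Category) (c0 c1 : Obj C) (S T : Type)
  (f : S -> T) (g : S -> @Hom C c0 c1) (j : Functor (two T) D) (i : Functor C D) :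
  feq (Fcomp j (two_map f)) (Fcomp i (Gfun g)) ->
  forall (e0 : fobj j false = fobj i c0) (e1 : fobj j true = fobj i c1) (s : S),
  hcast e0 e1 (@fmor _ _ j false true (f s)) = fmor i (g s).
Proof. intros Hsq e0 e1 s; apply hcast_eq, (proj2 Hsq false true s). Qed.

Theorem mainTheorem9 (C : Category) (HC : one_way C) (c0 c1 : Obj C)
  (H01 : cprec C c0 c1) (S T : Type) (f : S -> T) (g : S -> @Hom C c0 c1)
  (D : Category) (j : Functor (two T) D) (i : Functor C D)
  (Hpo : is_cat_pushout (two_map f) (Gfun g) j i) :
  bijective (fobj i) /\
  forall (a b : Obj C)
         (e0 : fobj j false = fobj i c0) (e1 : fobj j true = fobj i c1),
    is_set_pushout
      (fun x : @Hom C c1 b * S * @Hom C a c0 =>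
         let '(q, s, p) := x in (q, f s, p))
      (fun x : @Hom C c1 b * S * @Hom C a c0 =>
         let '(q, s, p) := x in comp q (comp (g s) p))
      (fun y : @Hom C c1 b * T * @Hom C a c0 =>
         let '(q, t, p) := y in
         comp (fmor i q)
              (comp (hcast e0 e1 (@fmor _ _ j false true t)) (fmor i p)))
      (fun h : @Hom C a b => fmor i h).
Proof.
  pose proof (no_back_of_one_way C c0 c1 HC H01) as no_back.
  pose proof Hpo as [Hsq Huniv].
  assert (e0 : fobj j false = fobj i c0) by exact (proj1 Hsq false).
  assert (e1 : fobj j true = fobj i c1) by exact (proj1 Hsq true).
  pose proof (square_on_generators C D c0 c1 S T f g j i Hsq e0 e1) as j_g.
  destruct (Huniv _ _ _ (E_square C c0 c1 S T f g no_back)) as [H [H_j [H_i _]]].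
  set (K := Kfun C c0 c1 S T f g no_back D j i e0 e1 j_g).
  assert (KH : feq (Fcomp K H) (IdF D)).
  { apply (pushout_retraction _ _ _ _ Hpo).
    - eapply feq_trans; [apply feq_comp_l, H_j | apply K_jE].
    - eapply feq_trans; [apply feq_comp_l, H_i | apply K_iE]. }
  split; [exact (i_bijective _ _ _ _ _ _ _ _ _ _ _ _ _ _ _ H_i KH) |].
  intros a b e0' e1'.
  rewrite (proof_irrelevance _ e0' e0), (proof_irrelevance _ e1' e1).
  exact (hom_set_pushout _ _ _ _ _ _ _ _ _ _ _ _ _ _ _ H_i H_j KH a b).
Qed.
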